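(* Let $G$ be a free abelian group, let $D$ be a subgroup of $G$, let $L\in{\mathrm{End}}_{\mathbb{Z}}(G)$ satisfy $L(D)\subseteq D$, and let $k$ be a positive integer such that the restriction of $L$ to $L^k(D)$ is a monomorphism $L^k(D)\to D$. Let $\overline{L}:G/D\to G/D$ be the induced endomorphism $g+D\mapsto L(g)+D$. Then for every finitely generated subgroup $X\subseteq G$, writing $\overline{X}:=(X+D)/D$, we have $$\eta_L(X)\leq \eta_{\overline{L}}(\overline{X})+k.$$
   Context: For an abelian group $M$, an endomorphism $f$ of $M$ and a finitely generated subgroup $Y\subseteq M$, $\eta_f(Y)$ denotes the least non-negative integer $k$ such that for every $m\geq k$ the restriction $f|_{f^m(Y)}:f^m(Y)\to f^{m+1}(Y)$ is an isomorphism (this integer exists by Fitting's Lemma over the noetherian ring $\mathbb{Z}$). *)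

From HB Require Import structures.
From mathcomp Require Import all_boot all_order all_algebra.
From Stdlib Require Import ClassicalEpsilon.
Set Implicit Arguments. Unset Strict Implicit. Unset Printing Implicit Defensive.
Import GRing.Theory.
Local Open Scope ring_scope.

Definition is_subgroup (M : zmodType) (S : M -> Prop) : Prop :=
  S 0 /\ (forall x y, S x -> S y -> S (x - y)).

Definition fingen_subgroup (M : zmodType) (S : M -> Prop) : Prop :=
  exists (n : nat) (g : 'I_n -> M),
    forall x, S x <-> exists c : 'I_n -> int, x = \sum_(j < n) g j *~ c j.

Definition free_abelian (M : zmodType) : Prop :=
  exists (I : Type) (b : I -> M),
    (forall x, exists (n : nat) (i : 'I_n -> I) (c : 'I_n -> int),
        x = \sum_(j < n) b (i j) *~ c j) /\
    (forall (n : nat) (i : 'I_n -> I) (c : 'I_n -> int),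
        injective i -> \sum_(j < n) b (i j) *~ c j = 0 -> forall j, c j = 0).

Definition img (M N : Type) (f : M -> N) (S : M -> Prop) : N -> Prop :=
  fun y => exists x, S x /\ y = f x.

Definition iter_img (M : Type) (f : M -> M) (m : nat) (S : M -> Prop) : M -> Prop :=
  img (iter m f) S.

Definition inj_on (M N : Type) (f : M -> N) (S : M -> Prop) : Prop :=
  forall x y, S x -> S y -> f x = f y -> x = y.

(* k works for eta: for every m >= k the restriction
   f|_{f^m(Y)} : f^m(Y) -> f^{m+1}(Y) is an isomorphism
   (it is onto f^{m+1}(Y) by definition, so this is injectivity). *)
Definition eta_ok (M : zmodType) (f : M -> M) (Y : M -> Prop) (k : nat) : Prop :=
  forall m, (k <= m)%N -> inj_on f (iter_img f m Y).

Definition eta_okb (M : zmodType) (f : M -> M) (Y : M -> Prop) : pred nat :=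
  fun k => if excluded_middle_informative (eta_ok f Y k) then true else false.

(* eta_f(Y): the least k with eta_ok f Y k (0 if none exists, which does not
   happen for finitely generated Y by Fitting's lemma). *)
Definition eta_index (M : zmodType) (f : M -> M) (Y : M -> Prop) : nat :=
  match excluded_middle_informative (exists k, eta_okb f Y k) with
  | left H => ex_minn H
  | right _ => 0%N
  end.

From HB Require Import structures.
From mathcomp Require Import all_boot all_order all_algebra.
From Stdlib Require Import Classical ClassicalEpsilon.
Set Implicit Arguments. Unset Strict Implicit. Unset Printing Implicit Defensive.
Import Order.TTheory GRing.Theory.
Local Open Scope ring_scope.

(* Let e be the index of Lbar on Xbar.  If z lies in X and L^(m+1) z = 0 with
   m >= e + k, then Lbar^(m+1) kills the class of z, and the injectivity of
   Lbar on Lbar^j(Xbar) for j >= e strips off powers of Lbar down to the e-th,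
   so L^e z lies in D.  As L maps D into D, L^m z then lies in L^k(D), where L
   is injective, and L (L^m z) = 0 forces L^m z = 0.  This kernel condition
   is equivalent to the injectivity of L on L^m(X), whence eta_L(X) <= e + k.
   That e is a genuine index (and not the junk value 0 of eta_index) is
   Fitting's lemma for finitely generated abelian groups, which rests on the
   noetherianity of Z^n: splitting off a coordinate, a chain of subgroups of
   Z^(1+n) stabilizes once its images in Z and its intersections with Z^n do. *)

Section Subgroup.
Variables (M : zmodType) (S : M -> Prop).
Hypothesis S_subgroup : is_subgroup S.

Lemma subgroup0 : S 0. Proof. by case: S_subgroup. Qed.

Lemma subgroupB x y : S x -> S y -> S (x - y).
Proof. by case: S_subgroup => _; apply. Qed.

Lemma subgroupN x : S x -> S (- x).
Proof. by move=> Sx; rewrite -sub0r; apply: subgroupB => //; apply: subgroup0. Qed.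

Lemma subgroupD x y : S x -> S y -> S (x + y).
Proof. by move=> Sx Sy; rewrite -[y]opprK; apply/subgroupB/subgroupN. Qed.

Lemma subgroupMz x c : S x -> S (x *~ c).
Proof.
move=> Sx; have SMn n : S (x *+ n).
  by elim: n => [|n IH]; [rewrite mulr0n; apply: subgroup0 | rewrite mulrS; apply: subgroupD].
case: c => n; first exact: SMn.
by rewrite NegzE mulrNz; apply/subgroupN/SMn.
Qed.

End Subgroup.

Lemma fingen_subgroupW (M : zmodType) (Y : M -> Prop) :
  fingen_subgroup Y -> is_subgroup Y.
Proof.
move=> [n [g Y_span]]; split.
  by apply/Y_span; exists (fun=> 0); rewrite big1 // => j _; rewrite mulr0z.
move=> x y /Y_span[c ->] /Y_span[d ->]; apply/Y_span; exists (fun j => c j - d j).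
by rewrite -sumrB; apply: eq_bigr => j _; rewrite mulrzBr.
Qed.

Lemma fingen_img (M N : zmodType) (f : {additive M -> N}) (Y : M -> Prop) :
  fingen_subgroup Y -> fingen_subgroup (img f Y).
Proof.
move=> [n [g Y_span]]; exists n, (f \o g) => y.
have f_sum c : f (\sum_(j < n) g j *~ c j) = \sum_(j < n) (f \o g) j *~ c j.
  by rewrite raddf_sum; apply: eq_bigr => j _; rewrite raddfMz.
split=> [[x [/Y_span[c ->] ->]] | [c ->]]; first by exists c; rewrite f_sum.
exists (\sum_(j < n) g j *~ c j); split; last by rewrite f_sum.
by apply/Y_span; exists c.
Qed.

Lemma zmod_morphism0 (U V : zmodType) (f : U -> V) : zmod_morphism f -> f 0 = 0.
Proof. by move=> fB; rewrite -(subrr 0) fB subrr. Qed.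

Lemma ex_minn_prop (P : nat -> Prop) :
  (exists n, P n) -> exists2 n, P n & forall m, P m -> (n <= m)%N.
Proof.
pose p : pred nat := fun n => if excluded_middle_informative (P n) then true else false.
have pP n : reflect (P n) (p n).
  by rewrite /p; case: excluded_middle_informative => /= Pn; constructor.
move=> [n /pP pn]; have [m /pP Pm m_min] := ex_minnP (ex_intro p n pn).
by exists m => // j /pP; apply: m_min.
Qed.

Definition subgroup_chain (M : zmodType) (A : nat -> M -> Prop) :=
  (forall m, is_subgroup (A m)) /\ (forall m x, A m x -> A m.+1 x).

Definition stationary (M : zmodType) (A : nat -> M -> Prop) :=
  exists N, forall m x, (N <= m)%N -> A m x -> A N x.

Definition noetherian (M : zmodType) :=
  forall A : nat -> M -> Prop, subgroup_chain A -> stationary A.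

Lemma subgroup_chain_mono (M : zmodType) (A : nat -> M -> Prop) m n x :
  subgroup_chain A -> (m <= n)%N -> A m x -> A n x.
Proof.
move=> [_ A_inc] /subnK <-; elim: (n - m)%N => //= d IH /IH.
by rewrite addSn; apply: A_inc.
Qed.

Lemma subgroup_chain_preim (K M : zmodType) (psi : K -> M) (A : nat -> M -> Prop) :
  zmod_morphism psi -> subgroup_chain A -> subgroup_chain (fun m y => A m (psi y)).
Proof.
move=> psiB [A_sub A_inc]; split=> [m|m y]; last exact: A_inc.
split; first by rewrite zmod_morphism0 //; apply: subgroup0.
by move=> x y Ax Ay; rewrite psiB; apply: subgroupB.
Qed.

Lemma subgroup_chain_img (M N : zmodType) (phi : M -> N) (A : nat -> M -> Prop) :
  zmod_morphism phi -> subgroup_chain A -> subgroup_chain (fun m => img phi (A m)).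
Proof.
move=> phiB [A_sub A_inc]; split=> [m|m _ [x [Ax ->]]].
  split; first by exists 0; rewrite zmod_morphism0 //; split=> //; apply: subgroup0.
  move=> _ _ [x [Ax ->]] [y [Ay ->]]; exists (x - y); split; last by rewrite phiB.
  exact: subgroupB.
by exists x; split; [apply: A_inc|].
Qed.

Lemma noetherian_ext (K M N : zmodType) (psi : K -> M) (phi : M -> N) :
  zmod_morphism psi -> zmod_morphism phi ->
  (forall x, phi x = 0 -> exists y, x = psi y) ->
  noetherian K -> noetherian N -> noetherian M.
Proof.
move=> psiB phiB ker_phi noethK noethN A A_chain.
have [N1 stableK] := noethK _ (subgroup_chain_preim psiB A_chain).
have [N2 stableN] := noethN _ (subgroup_chain_img phiB A_chain).
exists (maxn N1 N2) => m x; rewrite geq_max => /andP[le1 le2] Ax.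
have [x' [Ax' phi_x]] := stableN m (phi x) le2 (ex_intro _ x (conj Ax erefl)).
have Amx' : A m x' by apply: subgroup_chain_mono Ax'.
have [y xE] : exists y, x - x' = psi y by apply: ker_phi; rewrite phiB phi_x subrr.
have Ay : A m (psi y) by rewrite -xE; apply: subgroupB (A_chain.1 m) _ _ Ax Amx'.
rewrite -(subrK x' x) xE; apply: subgroupD (A_chain.1 _) _ _ _ _.
  exact: subgroup_chain_mono (leq_maxl _ _) (stableK m y le1 Ay).
exact: subgroup_chain_mono (leq_maxr _ _) Ax'.
Qed.

Lemma subgroup_int_abs (S : int -> Prop) x : is_subgroup S -> S x -> S `|x|%N.
Proof.
by move=> S_sub; case: x => n // Sx; rewrite -[Posz _]opprK -NegzE; apply: subgroupN.
Qed.

(* Stationary from the first index carrying the least positive element that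
   ever occurs, since from then on every element is a multiple of it. *)
Lemma noetherian_int : noetherian int.
Proof.
move=> A A_chain; have A_sub := A_chain.1.
case: (classic (exists v, (0 < v)%N /\ exists m, A m v)) => [ex_pos | no_pos].
  have [v [v_gt0 [m0 Av]] v_min] := ex_minn_prop ex_pos.
  exists m0 => m x le Ax; have Amv := subgroup_chain_mono A_chain le Av.
  have xE := divz_eq x v; set q := (x %/ v)%Z in xE; set r := (x %% v)%Z in xE.
  have Ar : A m r.
    have -> : r = x - v%:Z *~ q by rewrite xE mulrzz mulrC addrC addKr.
    by apply: subgroupB => //; apply: subgroupMz.
  have r_eq0 : r = 0.
    have v_neq0 : v%:Z != 0 by rewrite eqz_nat -lt0n.
    have r_ge0 := modz_ge0 x v_neq0; have r_lt := ltz_pmod x (v_gt0 : 0 < v%:Z).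
    apply: contraTeq r_lt => r_neq0; rewrite -leNgt -(gez0_abs r_ge0) lez_nat.
    by apply: v_min; split; [rewrite absz_gt0 | exists m; apply: subgroup_int_abs].
  by rewrite xE r_eq0 addr0 mulrC -mulrzz; apply: subgroupMz.
exists 0%N => m x _ Ax; suff -> : x = 0 by apply: subgroup0.
apply: NNPP => /eqP x_neq0; apply: no_pos; exists `|x|%N.
by split; [rewrite absz_gt0 | exists m; apply: subgroup_int_abs].
Qed.

Lemma noetherian_rV n : noetherian 'rV[int]_n.
Proof.
elim: n => [|n IH].
  move=> A A_chain; exists 0%N => m x _ _.
  by rewrite thinmx0; apply: subgroup0 (A_chain.1 0%N).
change (noetherian 'rV[int]_(1 + n)).
apply: (@noetherian_ext 'rV[int]_n 'rV[int]_(1 + n) int (row_mx 0) (fun c => c 0 0)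
          _ _ _ IH noetherian_int).
- by move=> x y; rewrite opp_row_mx add_row_mx subrr.
- by move=> c d; rewrite !mxE.
move=> c c0; exists (rsubmx c); rewrite -[c in LHS]hsubmxK; congr row_mx.
apply/rowP => j; rewrite !mxE ord1.
by have -> : lshift n (0 : 'I_1) = 0 by apply: val_inj.
Qed.

Section Iterates.
Variables (M : zmodType) (f : M -> M).
Hypothesis f_morph : zmod_morphism f.

Lemma iterB m : zmod_morphism (iter m f).
Proof. by elim: m => [|m IH] x y //=; rewrite IH f_morph. Qed.

Lemma iter_morph0 m : iter m f 0 = 0.
Proof. exact: zmod_morphism0 (iterB m). Qed.

Lemma iter_kernel_chain : subgroup_chain (fun m x => iter m f x = 0).
Proof.
split=> [m | m x /= ->]; last exact: zmod_morphism0.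
by split=> [|x y fx fy]; rewrite ?iter_morph0 // iterB fx fy subrr.
Qed.

Lemma eta_okP (Y : M -> Prop) e : is_subgroup Y ->
  eta_ok f Y e <->
  (forall m y, (e <= m)%N -> Y y -> iter m.+1 f y = 0 -> iter m f y = 0).
Proof.
move=> Y_sub; split=> [f_inj m y le Yy fy0 | ker_f m le _ _ [y1 [Y1 ->]] [y2 [Y2 ->]] eq12].
  rewrite -(iter_morph0 m); apply: (f_inj m le); first by exists y.
    by exists 0; split=> //; apply: subgroup0.
  by rewrite -!iterS fy0 iter_morph0.
apply/eqP; rewrite -subr_eq0 -iterB; apply/eqP; apply: ker_f => //.
  exact: subgroupB.
by rewrite iterB !iterS eq12 subrr.
Qed.

Lemma eta_ok_iter_eq0 (Y : M -> Prop) e j y : is_subgroup Y -> eta_ok f Y e ->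
  (e <= j)%N -> Y y -> iter j f y = 0 -> iter e f y = 0.
Proof.
move=> Y_sub /(eta_okP _ Y_sub) ker_f; elim: j => [|j IH]; first by rewrite leqn0 => /eqP ->.
rewrite leq_eqVlt => /orP[/eqP -> // | le] Yy fy0.
exact: IH le Yy (ker_f j y le Yy fy0).
Qed.

Lemma fitting (Y : M -> Prop) : fingen_subgroup Y -> exists k, eta_ok f Y k.
Proof.
move=> Y_fg; have Y_sub := fingen_subgroupW Y_fg; have [n [g Y_span]] := Y_fg.
pose psi (c : 'rV[int]_n) := \sum_(j < n) g j *~ c 0 j.
have psiB : zmod_morphism psi.
  by move=> c d; rewrite /psi -sumrB; apply: eq_bigr => j _; rewrite !mxE mulrzBr.
have [N stable] := noetherian_rV (subgroup_chain_preim psiB iter_kernel_chain).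
exists N; apply/eta_okP => // m y le /Y_span[c ->] fy0.
have psi_c : psi (\row_j c j) = \sum_(j < n) g j *~ c j.
  by apply: eq_bigr => j _; rewrite mxE.
rewrite -psi_c in fy0 *.
exact: subgroup_chain_mono iter_kernel_chain le (stable _ _ (leqW le) fy0).
Qed.

End Iterates.

Lemma eta_okbP (M : zmodType) (f : M -> M) (Y : M -> Prop) k :
  reflect (eta_ok f Y k) (eta_okb f Y k).
Proof. by rewrite /eta_okb; case: excluded_middle_informative => ok; constructor. Qed.

Lemma eta_indexP (M : zmodType) (f : M -> M) (Y : M -> Prop) :
  (exists k, eta_ok f Y k) -> eta_ok f Y (eta_index f Y).
Proof.
move=> [k /eta_okbP ok_k]; rewrite /eta_index.
case: excluded_middle_informative => [ex | []]; last by exists k.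
by case: (ex_minnP ex) => e /eta_okbP.
Qed.

Lemma eta_index_min (M : zmodType) (f : M -> M) (Y : M -> Prop) k :
  eta_ok f Y k -> (eta_index f Y <= k)%N.
Proof.
move=> /eta_okbP ok_k; rewrite /eta_index.
case: excluded_middle_informative => [ex | []]; last by exists k.
by case: (ex_minnP ex) => e _; apply.
Qed.

Section QuotientIndex.
Variables (G Q : zmodType) (D X : G -> Prop) (L : {additive G -> G}).
Variables (pi : {additive G -> Q}) (Lbar : Q -> Q) (k : nat).
Hypotheses (D_sub : is_subgroup D) (L_D : forall d, D d -> D (L d)).
Hypothesis L_inj : inj_on L (iter_img L k D).
Hypotheses (pi_surj : forall q, exists g, pi g = q) (pi_ker : forall g, pi g = 0 <-> D g).
Hypothesis Lbar_pi : forall g, Lbar (pi g) = pi (L g).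

Lemma Lbar_morph : zmod_morphism Lbar.
Proof.
move=> x y; have [a <-] := pi_surj x; have [b <-] := pi_surj y.
by rewrite -raddfB !Lbar_pi -!raddfB.
Qed.

Lemma iter_Lbar_pi j g : iter j Lbar (pi g) = pi (iter j L g).
Proof. by elim: j => //= j ->; rewrite Lbar_pi. Qed.

Lemma iter_L_D i d : D d -> D (iter i L d).
Proof. by move=> Dd; elim: i => //= i; apply: L_D. Qed.

Lemma D_iter_eq0 m d : (k <= m)%N -> D d -> iter m.+1 L d = 0 -> iter m L d = 0.
Proof.
move=> le Dd Ld0; have mE : m = (k + (m - k))%N by rewrite subnKC.
rewrite mE iterD -(iter_morph0 (raddfB L) k); apply: L_inj.
- by exists (iter (m - k) L d); split=> //; apply: iter_L_D.
- by exists 0; split=> //; apply: subgroup0.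
by rewrite -!iterS -iterD addSn -mE Ld0 (iter_morph0 (raddfB L)).
Qed.

Lemma eta_ok_quotient :
  fingen_subgroup X -> eta_ok L X (eta_index Lbar (img pi X) + k).
Proof.
move=> X_fg; set e := eta_index Lbar (img pi X).
have Xbar_fg := fingen_img pi X_fg.
have Lbar_eta : eta_ok Lbar (img pi X) e := eta_indexP (fitting Lbar_morph Xbar_fg).
apply/(eta_okP (raddfB L) _ (fingen_subgroupW X_fg)) => m z le Xz Lz0.
have le_em : (e <= m)%N := leq_trans (leq_addr k e) le.
have D_Lez : D (iter e L z).
  apply/pi_ker; rewrite -iter_Lbar_pi.
  apply: (eta_ok_iter_eq0 Lbar_morph (fingen_subgroupW Xbar_fg) Lbar_eta (leqW le_em)).
    by exists z.
  by rewrite iter_Lbar_pi Lz0 raddf0.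
rewrite -(subnK le_em) iterD; apply: D_iter_eq0 D_Lez _.
  by rewrite leq_subRL // addnC.
by rewrite -iterD addSn subnK.
Qed.

End QuotientIndex.

Theorem lemma3p3 (G : zmodType) (D : G -> Prop) (L : {additive G -> G}) (k : nat)
  (Q : zmodType) (pi : {additive G -> Q}) (Lbar : Q -> Q) (X : G -> Prop) :
  free_abelian G ->
  is_subgroup D ->
  (forall d, D d -> D (L d)) ->
  (0 < k)%N ->
  inj_on L (iter_img L k D) ->
  (forall q : Q, exists g, pi g = q) ->
  (forall g, pi g = 0 <-> D g) ->
  (forall g, Lbar (pi g) = pi (L g)) ->
  fingen_subgroup X ->
  (eta_index L X <= eta_index Lbar (img pi X) + k)%N.
Proof.
move=> _ D_sub L_D _ L_inj pi_surj pi_ker Lbar_pi X_fg.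
exact: eta_index_min (eta_ok_quotient D_sub L_D L_inj pi_surj pi_ker Lbar_pi X_fg).
Qed.
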